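(* Let $\mathcal{B}$ and $\mathcal{C}$ be algebras in a functional language $\mathcal{L}$. If $\mathrm{Th}_{\exists}(\mathcal{B})\supseteq\mathrm{Th}_{\exists}(\mathcal{C})$, then $\mathcal{C}$ is isomorphic to some limit algebra over $\mathcal{B}$.
   Context: Functional language: operation symbols $F$ (arity $n_F$) and constants only. $\mathrm{Th}_\exists(\mathcal{M})$ is the set of existential $\mathcal{L}$-sentences true in $\mathcal{M}$. A diagram-formula in a finite reduct $\mathcal{L}'$ of $\mathcal{L}$ in finite variables $X$ is a conjunction of atomic formulas and negations such that $\neg(x=y)$ is a conjunct for distinct $x,y\in X$, for each $F\in\mathcal{L}'$ and $(x_0,\dots,x_{n_F})\in X^{n_F+1}$ exactly one of $F(x_1,\dots,x_{n_F})=x_0$ and its negation is a conjunct, and for each constant $c\in\mathcal{L}'$ and $x\in X$ exactly one of $x=c$, $\neg(x=c)$ is a conjunct. A direct system of formulas $\Lambda=(I,\varphi_i,\gamma_{ij})$: $(I,\le)$ directed; $\varphi_i$ consistent diagram-formulas in finite reducts $\mathcal{L}_i$ and finite variables $X_i$; maps $\gamma_{ij}:X_i\to X_j$ ($i\le j$) with $\gamma_{ii}=\mathrm{id}$, $\gamma_{jk}\gamma_{ij}=\gamma_{ik}$, conjuncts of $\varphi_i(\gamma_{ij}(X_i))$ are conjuncts of $\varphi_j$; every constant appears in a conjunct $x=c$ of some $\varphi_i$; for every $F,i,(x_1,\dots,x_{n_F})\in X_i^{n_F}$ some $j\ge i$ has a conjunct $F(\gamma_{ij}(x_1),\dots,\gamma_{ij}(x_{n_F}))=x_j$.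 The limit algebra $L(\Lambda)$ has universe $\{(x,i):x\in X_i\}/\!\equiv$, $(x,i)\equiv(y,j)$ iff $\gamma_{ik}(x)=\gamma_{jk}(y)$ for some $k\ge i,j$, with constants and operations read off from the conjuncts $x=c$ and $F(\dots)=x_j$ (well defined). It is a limit algebra over $\mathcal{B}$ if each $\varphi_i$ is true in $\mathcal{B}$ under some assignment $X_i\to B$. *)

From mathcomp Require Import all_boot.
From Stdlib Require List.

Set Implicit Arguments.
Unset Strict Implicit.
Unset Printing Implicit Defensive.

Record language := Language {
  Fsym : Type;
  ar : Fsym -> nat;
  Csym : Type }.

Record algebra (L : language) := Algebra {
  carrier :> Type;
  fint : forall F : Fsym L, (ar F).-tuple carrier -> carrier;
  cint : Csym L -> carrier }.

Arguments fint {L} a F _.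
Arguments cint {L} a c.

Definition isomorphism (L : language) (A B : algebra L) (f : A -> B) : Prop :=
  bijective f /\
  (forall c : Csym L, f (cint A c) = cint B c) /\
  (forall (F : Fsym L) (t : (ar F).-tuple A),
      f (fint A F t) = fint B F (map_tuple f t)).

Definition isomorphic (L : language) (A B : algebra L) : Prop :=
  exists f : A -> B, isomorphism f.

Inductive term (L : language) (V : Type) : Type :=
  | TVar : V -> term L V
  | TCst : Csym L -> term L V
  | TApp : forall F : Fsym L, ('I_(ar F) -> term L V) -> term L V.

Inductive qf_formula (L : language) (V : Type) : Type :=
  | QEq : term L V -> term L V -> qf_formula L V
  | QNot : qf_formula L V -> qf_formula L V
  | QAnd : qf_formula L V -> qf_formula L V -> qf_formula L V
  | QOr : qf_formula L V -> qf_formula L V -> qf_formula L V.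

Fixpoint eval_term (L : language) (V : Type) (A : algebra L) (v : V -> A)
    (t : term L V) : A :=
  match t with
  | TVar x => v x
  | TCst c => cint A c
  | TApp F args => fint A F [tuple @eval_term L V A v (args k) | k < ar F]
  end.

Fixpoint holds_qf (L : language) (V : Type) (A : algebra L) (v : V -> A)
    (f : qf_formula L V) : Prop :=
  match f with
  | QEq t1 t2 => eval_term v t1 = eval_term v t2
  | QNot g => ~ @holds_qf L V A v g
  | QAnd g h => @holds_qf L V A v g /\ @holds_qf L V A v h
  | QOr g h => @holds_qf L V A v g \/ @holds_qf L V A v h
  end.

Record ex_sentence (L : language) := ExSentence {
  nvars : nat;
  matrix : qf_formula L 'I_nvars }.

Definition holds_ex (L : language) (A : algebra L) (s : ex_sentence L) : Prop :=
  exists v : 'I_(nvars s) -> A, holds_qf v (matrix s).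

Definition Th_ex_incl (L : language) (C B : algebra L) : Prop :=
  forall s : ex_sentence L, holds_ex C s -> holds_ex B s.

Inductive lit (L : language) (X : Type) : Type :=
  | LEq : X -> X -> lit L X
  | LNeq : X -> X -> lit L X
  | LFun : forall F : Fsym L, (ar F).-tuple X -> X -> lit L X
  | LNFun : forall F : Fsym L, (ar F).-tuple X -> X -> lit L X
  | LCst : Csym L -> X -> lit L X
  | LNCst : Csym L -> X -> lit L X.

Definition map_lit (L : language) (X Y : Type) (g : X -> Y) (l : lit L X)
    : lit L Y :=
  match l with
  | LEq x y => LEq L (g x) (g y)
  | LNeq x y => LNeq L (g x) (g y)
  | LFun F xs x0 => LFun (map_tuple g xs) (g x0)
  | LNFun F xs x0 => LNFun (map_tuple g xs) (g x0)
  | LCst c x => LCst c (g x)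
  | LNCst c x => LNCst c (g x)
  end.

Definition holds_lit (L : language) (X : Type) (A : algebra L) (v : X -> A)
    (l : lit L X) : Prop :=
  match l with
  | LEq x y => v x = v y
  | LNeq x y => v x <> v y
  | LFun F xs x0 => fint A F (map_tuple v xs) = v x0
  | LNFun F xs x0 => fint A F (map_tuple v xs) <> v x0
  | LCst c x => v x = cint A c
  | LNCst c x => v x <> cint A c
  end.

Definition conj_formula (L : language) (X : Type) := list (lit L X).

Definition sat (L : language) (X : Type) (A : algebra L) (v : X -> A)
    (phi : conj_formula L X) : Prop :=
  forall l, List.In l phi -> holds_lit v l.

Definition consistent (L : language) (X : Type) (phi : conj_formula L X) : Prop :=
  exists (A : algebra L) (v : X -> A), sat v phi.

(** A finite reduct L' of L, given by predicates on the symbols. *)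
Definition finite_pred (T : Type) (P : T -> Prop) : Prop :=
  exists s : list T, forall t, P t -> List.In t s.

Definition lit_in_reduct (L : language) (X : Type)
    (pF : Fsym L -> Prop) (pC : Csym L -> Prop) (l : lit L X) : Prop :=
  match l with
  | LFun F _ _ | LNFun F _ _ => pF F
  | LCst c _ | LNCst c _ => pC c
  | _ => True
  end.

Definition is_diagram (L : language) (X : finType)
    (pF : Fsym L -> Prop) (pC : Csym L -> Prop) (phi : conj_formula L X) : Prop :=
  finite_pred pF /\ finite_pred pC /\
  (forall l, List.In l phi -> lit_in_reduct pF pC l) /\
  (forall x y : X, x <> y -> List.In (LNeq L x y) phi) /\
  (forall F : Fsym L, pF F -> forall (xs : (ar F).-tuple X) (x0 : X),
      (List.In (LFun xs x0) phi <-> ~ List.In (LNFun xs x0) phi)) /\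
  (forall c : Csym L, pC c -> forall x : X,
      (List.In (LCst c x) phi <-> ~ List.In (LNCst c x) phi)).

Record dsys (L : language) := DSys {
  ds_I : Type;
  ds_le : ds_I -> ds_I -> Prop;
  ds_X : ds_I -> finType;
  ds_pF : ds_I -> Fsym L -> Prop;
  ds_pC : ds_I -> Csym L -> Prop;
  ds_phi : forall i, conj_formula L (ds_X i);
  ds_gam : forall i j, ds_X i -> ds_X j }.

Arguments ds_le {L} d _ _.
Arguments ds_pF {L} d _ _.
Arguments ds_pC {L} d _ _.
Arguments ds_X {L} d _.
Arguments ds_phi {L} d i.
Arguments ds_gam {L} d i j _.

Definition directed (I : Type) (le : I -> I -> Prop) : Prop :=
  inhabited I /\
  (forall i, le i i) /\
  (forall i j k, le i j -> le j k -> le i k) /\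
  (forall i j, exists k, le i k /\ le j k).

Definition is_direct_system (L : language) (D : dsys L) : Prop :=
  directed (ds_le D) /\
  (forall i, is_diagram (ds_pF D i) (ds_pC D i) (ds_phi D i)) /\
  (forall i, consistent (ds_phi D i)) /\
  (forall i (x : ds_X D i), ds_gam D i i x = x) /\
  (forall i j k, ds_le D i j -> ds_le D j k ->
     forall x, ds_gam D j k (ds_gam D i j x) = ds_gam D i k x) /\
  (forall i j, ds_le D i j ->
     forall l, List.In l (ds_phi D i) -> List.In (map_lit (ds_gam D i j) l) (ds_phi D j)) /\
  (forall c : Csym L, exists i (x : ds_X D i), List.In (LCst c x) (ds_phi D i)) /\
  (forall (F : Fsym L) i (xs : (ar F).-tuple (ds_X D i)),
     exists j (x : ds_X D j), ds_le D i j /\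
       List.In (LFun (map_tuple (ds_gam D i j) xs) x) (ds_phi D j)).

Definition ds_elt (L : language) (D : dsys L) := {i : ds_I D & ds_X D i}.

Definition ds_equiv (L : language) (D : dsys L) (a b : ds_elt D) : Prop :=
  exists k, ds_le D (projT1 a) k /\ ds_le D (projT1 b) k /\
    ds_gam D (projT1 a) k (projT2 a) = ds_gam D (projT1 b) k (projT2 b).

(** The algebra A, together with pi : {(x,i)} -> A, is (a presentation of)
    the limit algebra L(D): pi is onto with kernel exactly the equivalence
    ==, i.e. A is the quotient {(x,i)}/==, and the constants and operations
    of A are those read off from the conjuncts x = c and
    F(gamma_ij(x_1),...,gamma_ij(x_n)) = x_j. *)
Definition is_limit_algebra (L : language) (D : dsys L) (A : algebra L)
    (pi : ds_elt D -> A) : Prop :=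
  (forall a : A, exists e, pi e = a) /\
  (forall e1 e2, pi e1 = pi e2 <-> ds_equiv e1 e2) /\
  (forall c i (x : ds_X D i), List.In (LCst c x) (ds_phi D i) ->
      cint A c = pi (existT _ i x)) /\
  (forall F i j (xs : (ar F).-tuple (ds_X D i)) (x0 : ds_X D j),
      ds_le D i j ->
      List.In (LFun (map_tuple (ds_gam D i j) xs) x0) (ds_phi D j) ->
      fint A F (map_tuple (fun x => pi (existT _ i x)) xs) = pi (existT _ j x0)).

Definition sys_over (L : language) (D : dsys L) (B : algebra L) : Prop :=
  forall i, exists v : ds_X D i -> B, sat v (ds_phi D i).

Arguments is_direct_system {L} D.
Arguments sys_over {L} D B.
Arguments is_limit_algebra {L} D A pi.
Arguments Th_ex_incl {L} C B.
Arguments isomorphic {L} A B.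
Arguments ds_elt {L} D.

(* Index by triples (S, F, K): a finite set S of elements of C and finite
   reducts F, K of the operation and constant symbols, and take as phi_S the
   complete diagram of S in C over that reduct.  Each phi_S, existentially
   closed, is an existential sentence true in C, hence true in B, so the
   system lies over B; and since the phi_S are all read off C itself, the
   limit algebra of the system is C, with (x, S) |-> x as projection. *)
From mathcomp Require Import all_boot.
From mathcomp Require Import boolp.
From Stdlib Require List.

Set Implicit Arguments.
Unset Strict Implicit.
Unset Printing Implicit Defensive.

Lemma InP (T : eqType) (x : T) (s : seq T) : reflect (List.In x s) (x \in s).
Proof.
elim: s => [|a s IH] /=; first by constructor.
rewrite in_cons; apply: (iffP orP) => [[/eqP ->|/IH]|[->|/IH]]; by auto.
Qed.

Lemma In_flat_map_enum (X : finType) (T : Type) (f : X -> list T) (a : T) :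
  List.In a (List.flat_map f (enum X)) <-> exists x, List.In a (f x).
Proof.
rewrite List.in_flat_map; split=> [[x [_ h]]|[x h]]; exists x => //.
by split=> //; apply/InP; rewrite mem_enum.
Qed.

Lemma map_tuple_comp (T U V : Type) n (f : T -> U) (g : U -> V)
    (t : n.-tuple T) :
  map_tuple g (map_tuple f t) = map_tuple (g \o f) t.
Proof. by apply: val_inj; rewrite /= map_comp. Qed.

Lemma eq_map_tuple (T U : Type) n (f g : T -> U) (t : n.-tuple T) :
  f =1 g -> map_tuple f t = map_tuple g t.
Proof. by move=> fg; apply: val_inj; apply: eq_map. Qed.

Lemma isomorphic_refl (L : language) (A : algebra L) : isomorphic A A.
Proof.
exists id; split; first by exists id.
by split=> // F t; congr (fint A F _); apply: val_inj; rewrite /= map_id.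
Qed.

Section Literals.
Variable L : language.

Lemma holds_map_lit (A : algebra L) (X Y : Type) (f : X -> Y) (w : Y -> A)
    (l : lit L X) :
  holds_lit w (map_lit f l) <-> holds_lit (w \o f) l.
Proof. by case: l => * /=; rewrite ?map_tuple_comp. Qed.

Lemma eq_holds_lit (A : algebra L) (X : Type) (w1 w2 : X -> A) (l : lit L X) :
  w1 =1 w2 -> holds_lit w1 l <-> holds_lit w2 l.
Proof. by move=> e; case: l => * /=; rewrite ?(eq_map_tuple _ e) ?e. Qed.

Lemma sat_map_lit (A : algebra L) (X Y : Type) (f : X -> Y) (w : Y -> A)
    (phi : conj_formula L X) :
  sat w (List.map (map_lit f) phi) <-> sat (w \o f) phi.
Proof.
split=> [h l hl | h _ /List.in_map_iff [l [<- hl]]]; apply/holds_map_lit.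
- by apply: h; apply: List.in_map.
- exact: h.
Qed.

Lemma eq_sat (A : algebra L) (X : Type) (w1 w2 : X -> A)
    (phi : conj_formula L X) :
  w1 =1 w2 -> sat w1 phi -> sat w2 phi.
Proof. by move=> e h l /h /(eq_holds_lit _ e). Qed.

Definition in_reduct (fs : seq (Fsym L)) (cs : seq (Csym L)) (X : Type) :
    lit L X -> Prop :=
  lit_in_reduct (fun F => List.In F fs) (fun c => List.In c cs).

Definition lits_over (X : finType) (fs : seq (Fsym L)) (cs : seq (Csym L)) :
    list (lit L X) :=
  List.app
    (List.flat_map (fun x => List.flat_map (fun y =>
       [:: LEq L x y; LNeq L x y]) (enum X)) (enum X))
  (List.app
    (List.flat_map (fun F => List.flat_map (fun xs =>
       List.flat_map (fun x0 => [:: LFun xs x0; LNFun xs x0]) (enum X))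
       (enum {: (ar F).-tuple X})) fs)
    (List.flat_map (fun c => List.flat_map (fun x =>
       [:: LCst c x; LNCst c x]) (enum X)) cs)).

Lemma in_lits_over (X : finType) fs cs (l : lit L X) :
  List.In l (lits_over X fs cs) <-> in_reduct fs cs l.
Proof.
rewrite !List.in_app_iff !List.in_flat_map; split.
- case=> [[x [_ /In_flat_map_enum [y h]]]|[[F [hF h]]|[c [hc h]]]].
  + by case: h => [<-|[<-|[]]].
  + by case/In_flat_map_enum: h => xs /In_flat_map_enum [x0 [<-|[<-|[]]]].
  + by case/In_flat_map_enum: h => x [<-|[<-|[]]].
- case: l => [x y|x y|F xs x0|F xs x0|c x|c x] /= h.
  1,2: left; exists x; split; first by apply/InP; rewrite mem_enum.
  1,2: by apply/In_flat_map_enum; exists y; simpl; auto.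
  1,2: right; left; exists F; split=> //.
  1,2: apply/In_flat_map_enum; exists xs.
  1,2: by apply/In_flat_map_enum; exists x0; simpl; auto.
  1,2: right; right; exists c; split=> //.
  1,2: by apply/In_flat_map_enum; exists x; simpl; auto.
Qed.

Definition diagram (A : algebra L) (X : finType) (v : X -> A) fs cs :
    conj_formula L X :=
  List.filter (fun l => `[< holds_lit v l >]) (lits_over X fs cs).

Lemma in_diagram (A : algebra L) (X : finType) (v : X -> A) fs cs l :
  List.In l (diagram v fs cs) <-> in_reduct fs cs l /\ holds_lit v l.
Proof. by rewrite List.filter_In in_lits_over; split=> -[? /asboolP]. Qed.

Lemma sat_diagram (A : algebra L) (X : finType) (v : X -> A) fs cs :
  sat v (diagram v fs cs).
Proof. by move=> l /in_diagram []. Qed.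

Lemma is_diagram_diagram (A : algebra L) (X : finType) (v : X -> A) fs cs :
  injective v ->
  is_diagram (fun F => List.In F fs) (fun c => List.In c cs) (diagram v fs cs).
Proof.
move=> v_inj; do 2 (split; first by [exists fs | exists cs]).
split; first by move=> l /in_diagram [].
split; first by move=> x y nxy; apply/in_diagram; split=> //= /v_inj.
by split=> [F hF xs x0|c hc x]; rewrite !in_diagram /=;
  split=> [[_ h] [_ /(_ h)] //|h]; split=> //; apply: contrapT => h'; apply: h.
Qed.

Lemma diagram_map (A : algebra L) (X Y : finType) (v : X -> A) (w : Y -> A)
    (f : X -> Y) fs cs fs' cs' :
  w \o f =1 v -> List.incl fs fs' -> List.incl cs cs' ->
  forall l, List.In l (diagram v fs cs) -> List.In (map_lit f l) (diagram w fs' cs').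
Proof.
move=> wf sF sC l /in_diagram [hl hv]; apply/in_diagram; split.
  by case: l hl {hv} => * /=; auto.
by apply/holds_map_lit/(eq_holds_lit _ wf).
Qed.

Definition lit_qf (V : Type) (l : lit L V) : qf_formula L V :=
  match l with
  | LEq x y => QEq (TVar L x) (TVar L y)
  | LNeq x y => QNot (QEq (TVar L x) (TVar L y))
  | LFun F xs x0 => QEq (TApp (fun k => TVar L (tnth xs k))) (TVar L x0)
  | LNFun F xs x0 => QNot (QEq (TApp (fun k => TVar L (tnth xs k))) (TVar L x0))
  | LCst c x => QEq (TVar L x) (TCst V c)
  | LNCst c x => QNot (QEq (TVar L x) (TCst V c))
  end.

Lemma holds_lit_qf (A : algebra L) (V : Type) (w : V -> A) (l : lit L V) :
  holds_qf w (lit_qf l) <-> holds_lit w l.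
Proof.
have e F (xs : (ar F).-tuple V) :
    [tuple w (tnth xs k) | k < ar F] = map_tuple w xs.
  by apply: eq_from_tnth => k; rewrite tnth_mktuple tnth_map.
by case: l => * /=; rewrite ?e.
Qed.

(* The tautology x = x makes the empty conjunction expressible: a language
   need not have any closed term. *)
Definition conj_qf (V : Type) (x : V) (phi : conj_formula L V) : qf_formula L V :=
  List.fold_right (@QAnd L V) (QEq (TVar L x) (TVar L x)) (List.map (@lit_qf V) phi).

Lemma holds_conj_qf (A : algebra L) (V : Type) (w : V -> A) (x : V) phi :
  holds_qf w (conj_qf x phi) <-> sat w phi.
Proof.
rewrite /sat; elim: phi => [|l phi IH] /=; first by split.
rewrite IH holds_lit_qf; split=> [[hl hphi] l' [<-|/hphi]|h] //.
by split=> [|l' hl']; apply: h; [left|right].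
Qed.

Lemma Th_ex_incl_sat_ord (B C : algebra L) n (phi : conj_formula L 'I_n) :
  Th_ex_incl C B ->
  (exists w : 'I_n -> C, sat w phi) -> exists w : 'I_n -> B, sat w phi.
Proof.
case: n phi => [|m] phi hCB [w hw].
  (* every literal mentions a variable, so over 'I_0 all conjunctions hold *)
  by exists (fun x : 'I_0 => False_rect _ (notF (ltn_ord x)));
     move=> l; case: l => [x|x|F xs x|F xs x|c x|c x]; case: x.
have [u hu] := hCB (ExSentence (conj_qf ord0 phi))
  (ex_intro _ w (proj2 (holds_conj_qf _ _ _) hw)).
by exists u; apply/(holds_conj_qf _ ord0).
Qed.

Lemma Th_ex_incl_sat (B C : algebra L) (X : finType) (phi : conj_formula L X) :
  Th_ex_incl C B ->
  (exists w : X -> C, sat w phi) -> exists w : X -> B, sat w phi.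
Proof.
move=> hCB [w hw]; pose psi := List.map (map_lit (@enum_rank X)) phi.
have [|u hu] := @Th_ex_incl_sat_ord B C _ psi hCB.
  exists (w \o enum_val); apply/sat_map_lit.
  by apply: eq_sat hw => x /=; rewrite enum_rankK.
by exists (u \o enum_rank); apply/sat_map_lit.
Qed.

End Literals.

Section DiagramSystem.
Variables (L : language) (C : algebra L).

Local Notation CT := {classic carrier C}.

(* The second disjunct makes the index set nonempty when C is empty; the
   first one guarantees that the maps gam i j below exist. *)
Record index := Index {
  elts : seq CT;
  fsyms : seq (Fsym L);
  csyms : seq (Csym L);
  elts_nonvoid : elts <> [::] \/ (CT -> False) }.

Definition X (i : index) : finType := seq_sub (elts i).

Lemma elts_gt0 (i : index) (c : CT) : 0 < size (elts i).
Proof. by case: i => [[|a s] fs cs [|/(_ c)]] // /(_ erefl). Qed.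

Definition embed (i : index) (c : CT) : X i := in_sub_seq (elts_gt0 i c) c.

Lemma val_embed i c : c \in elts i -> val (embed i c) = c.
Proof. by move=> ci; rewrite val_insubd ci. Qed.

Definition gam (i j : index) (x : X i) : X j := embed j (val x).

Definition index_le (i j : index) : Prop :=
  [/\ {subset elts i <= elts j}, List.incl (fsyms i) (fsyms j)
    & List.incl (csyms i) (csyms j)].

Lemma val_gam i j (x : X i) : index_le i j -> val (gam j x) = val x.
Proof. by case=> sij _ _; rewrite val_embed // sij // ssvalP. Qed.

Lemma gam_id i (x : X i) : gam i x = x.
Proof. by apply: val_inj; rewrite val_embed // ssvalP. Qed.

Lemma index_join_nonvoid i j : elts i ++ elts j <> [::] \/ (CT -> False).
Proof. by case: (elts_nonvoid i) => [|]; [case: (elts i); [|left]|right]. Qed.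

Definition index_join (i j : index) : index :=
  Index (fsyms i ++ fsyms j) (csyms i ++ csyms j) (index_join_nonvoid i j).

Lemma index_le_joinl i j : index_le i (index_join i j).
Proof.
split=> [x xi||] /=; first by rewrite mem_cat xi.
all: by apply/List.incl_appl/List.incl_refl.
Qed.

Lemma index_le_joinr i j : index_le j (index_join i j).
Proof.
split=> [x xj||] /=; first by rewrite mem_cat xj orbT.
all: by apply/List.incl_appr/List.incl_refl.
Qed.

Lemma directed_index_le : directed index_le.
Proof.
split.
  have [nC|c] := pselectT CT.
    by constructor; apply: (@Index [::] [::] [::]); right.
  by constructor; apply: (@Index [:: c] [::] [::]); left.
split; first by move=> i; split=> // x.
split; last first.
  move=> i j; exists (index_join i j).
  by split; [apply: index_le_joinl|apply: index_le_joinr].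
move=> i j k [s1 f1 c1] [s2 f2 c2].
by split=> [x /s1 /s2 //||]; apply: List.incl_tran; eassumption.
Qed.

Lemma single_nonvoid (c : CT) : [:: c] <> [::] \/ (CT -> False).
Proof. by left. Qed.

Definition single (c : CT) fs cs : index := Index fs cs (single_nonvoid c).

Definition point (c : CT) fs cs : X (single c fs cs) := SeqSub (mem_head c [::]).

Definition phi (i : index) : conj_formula L (X i) :=
  diagram (fun x : X i => val x : C) (fsyms i) (csyms i).

Definition diagram_sys : dsys L :=
  DSys index_le (fun i F => List.In F (fsyms i)) (fun i c => List.In c (csyms i))
    phi gam.

Lemma gam_comp i j k (x : X i) : index_le i j -> gam k (gam j x) = gam k x.
Proof. by move=> ij; rewrite /gam (val_gam _ ij). Qed.

Lemma phi_gam i j : index_le i j ->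
  forall l, List.In l (phi i) -> List.In (map_lit (gam j) l) (phi j).
Proof. by case=> [sE sF sC]; apply: diagram_map => // x /=; rewrite val_gam. Qed.

Lemma phi_cint c :
  List.In (LCst c (point (cint C c) [::] [:: c])) (phi (single _ [::] [:: c])).
Proof. by apply/in_diagram; split=> /=; [left|]. Qed.

Lemma phi_fint F i (xs : (ar F).-tuple (X i)) :
  let a := fint C F (map_tuple val xs) in
  let j := index_join i (single a [:: F] [::]) in
  List.In (LFun (map_tuple (gam j) xs) (embed j a)) (phi j).
Proof.
move=> a j; have ij : index_le i j by apply: index_le_joinl.
apply/in_diagram; split; first by apply/List.in_or_app; right; left.
rewrite /= map_tuple_comp (eq_map_tuple _ (fun x => val_gam x ij)).
by apply/esym/val_embed; rewrite mem_cat mem_head orbT.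
Qed.

Lemma diagram_sys_direct : is_direct_system diagram_sys.
Proof.
split; first exact: directed_index_le.
split; first by move=> i; apply: is_diagram_diagram; apply: val_inj.
split; first by move=> i; exists C, (fun x : X i => val x : C); apply: sat_diagram.
split; first exact: gam_id.
split; first by move=> i j k ij _ x; apply: gam_comp.
split; first exact: phi_gam.
split.
  by move=> c; exists (single (cint C c) [::] [:: c]), (point _ _ _); apply: phi_cint.
move=> F i xs; pose a := fint C F (map_tuple val xs).
exists (index_join i (single a [:: F] [::])), (embed _ a).
by split; [apply: index_le_joinl | apply: phi_fint].
Qed.

Definition sys_val (e : ds_elt diagram_sys) : C := val (projT2 e).

Lemma diagram_sys_limit : is_limit_algebra diagram_sys C sys_val.
Proof.
split; first by move=> a; exists (existT _ (single a [::] [::]) (point _ _ _)).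
split.
  move=> [i x] [j y]; rewrite /sys_val /=; split=> [xy|[k [ik [jk /(congr1 val)]]]].
    exists (index_join i j); split; first exact: index_le_joinl.
    split; first exact: index_le_joinr.
    apply: val_inj.
    by rewrite !val_gam //; [apply: index_le_joinr|apply: index_le_joinl].
  by rewrite !val_gam.
split; first by move=> c i x /in_diagram [_ /= <-].
move=> F i j xs x0 ij /in_diagram [_ /= h]; rewrite /sys_val /= -h map_tuple_comp.
by congr (fint C F _); apply: eq_map_tuple => x /=; rewrite val_gam.
Qed.

End DiagramSystem.

Theorem mainTheorem13 (L : language) (B C : algebra L) :
  Th_ex_incl C B ->
  exists (D : dsys L) (A : algebra L) (pi : ds_elt D -> A),
    is_direct_system D /\ sys_over D B /\ is_limit_algebra D A pi /\
    isomorphic C A.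
Proof.
move=> hCB; exists (diagram_sys C), C, (@sys_val L C).
split; first exact: diagram_sys_direct.
split.
  by move=> i; apply: Th_ex_incl_sat hCB _; exists (fun x => val x); apply: sat_diagram.
by split; [exact: diagram_sys_limit | exact: isomorphic_refl].
Qed.
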